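(* Let $\{X(s)\}_{s\ge 0}$ be a centered Gaussian process with continuous sample paths whose covariance kernel $R$ satisfies $R(cs,ct)=c^{2\rho}R(s,t)$ for some $\rho>0$ and all $c>0$, $s,t>0$. Let $h(x)=x^{-\rho}R(1,x)$ for $x\ge 1$. Fix $\alpha>1$, let $t_n=\alpha^n$, and set \[ \gamma_{k,l}=\mathrm{Cov}\big(X(t_{k+1})-X(t_k),\,X(t_{l+1})-X(t_l)\big),\qquad \gamma_k=\gamma_{k,k}. \] For integers $j\ge 0$ define $L_j(\alpha)=h(\alpha^j)-\alpha^{-\rho}\{h(\alpha^{j+1})+h(\alpha^{|j-1|})\}+\alpha^{-2\rho}h(\alpha^j)$. Then, whenever $\gamma_k,\gamma_l>0$, \[ \delta_{k,l}:=\frac{\gamma_{k,l}}{\gamma_k^{1/2}\gamma_l^{1/2}}=\frac{L_{|k-l|}(\alpha)}{L_0(\alpha)}. \] *)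

From HB Require Import structures.
From mathcomp Require Import all_boot all_order all_algebra.
From mathcomp Require Import all_classical all_reals all_analysis.
Set Implicit Arguments. Unset Strict Implicit. Unset Printing Implicit Defensive.
Import Order.TTheory GRing.Theory Num.Theory.
Import numFieldNormedType.Exports.
Local Open Scope classical_set_scope.
Local Open Scope ring_scope.

Section defs.
Context {d : measure_display} {T : measurableType d} {R : realType}.

Definition gaussian_rv (P : probability T R) (Y : T -> R) : Prop :=
  measurable_fun setT Y /\
  ((exists m : R, P (Y @^-1` [set m]) = 1%E) \/
   (exists m s : R, 0 < s /\
      forall A : set R, measurable A -> P (Y @^-1` A) = normal_prob m s A)).

Definition gaussian_process (P : probability T R) (X : R -> T -> R) : Prop :=
  forall (n : nat) (c : 'I_n -> R) (s : 'I_n -> R),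
    (forall i, 0 <= s i) ->
    gaussian_rv P (fun w => \sum_(i < n) c i * X (s i) w).

Definition centered_process (P : probability T R) (X : R -> T -> R) : Prop :=
  forall s : R, 0 <= s -> ('E_P[X s] = 0)%E.

Definition continuous_paths (X : R -> T -> R) : Prop :=
  forall w : T, {within [set x : R | 0 <= x], continuous (fun s => X s w)}.

Definition is_cov_kernel (P : probability T R) (X : R -> T -> R)
    (Rk : R -> R -> R) : Prop :=
  forall s t : R, 0 <= s -> 0 <= t -> covariance P (X s) (X t) = (Rk s t)%:E.

(* gamma_{k,l} = Cov(X(t_{k+1}) - X(t_k), X(t_{l+1}) - X(t_l)), t_n = alpha^n
   (real-valued: the covariance is finite since X(s) is square integrable) *)
Definition gamma_kl (P : probability T R) (X : R -> T -> R) (alpha : R)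
    (k l : nat) : R :=
  fine (covariance P (fun w => X (alpha ^+ k.+1) w - X (alpha ^+ k) w)
                     (fun w => X (alpha ^+ l.+1) w - X (alpha ^+ l) w)).

End defs.

Definition hfun {R : realType} (Rk : R -> R -> R) (rho x : R) : R :=
  x `^ (- rho) * Rk 1 x.

Definition Lfun_j {R : realType} (Rk : R -> R -> R) (rho alpha : R) (j : nat) : R :=
  hfun Rk rho (alpha ^+ j)
  - alpha `^ (- rho) * (hfun Rk rho (alpha ^+ j.+1)
                        + hfun Rk rho (alpha ^+ `|(j%:Z - 1)%R|%N))
  + alpha `^ (- (2 * rho)) * hfun Rk rho (alpha ^+ j).

(* Only the second-order structure of X enters.  With q := alpha^rho, the
   self-similarity of the kernel gives R(alpha^a, alpha^b) = q^(a+b) h(alpha^|a-b|),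
   so expanding the covariance of two increments by bilinearity yields
   gamma_{k,l} = q^(k+1) q^(l+1) L_{|k-l|}(alpha).  The factors q^(k+1), q^(l+1)
   cancel in the correlation, leaving L_{|k-l|} / L_0. *)
From HB Require Import structures.
From mathcomp Require Import all_boot all_order all_algebra.
From mathcomp Require Import all_classical all_reals all_analysis.
From mathcomp Require Import ring zify.
Set Implicit Arguments. Unset Strict Implicit. Unset Printing Implicit Defensive.
Import Order.TTheory GRing.Theory Num.Theory.
Import numFieldNormedType.Exports.
Local Open Scope classical_set_scope.
Local Open Scope ring_scope.

Lemma powR_exprn (R : realType) (a r : R) (n : nat) :
  0 <= a -> (a ^+ n) `^ r = (a `^ r) ^+ n.
Proof.
by move=> a_ge0; rewrite -powR_mulrn // -powRrM mulrC powRrM powR_mulrn ?powR_ge0.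
Qed.

Lemma corr_scaled (R : rcfType) (a b x y : R) :
  0 < a -> 0 < b -> 0 <= y ->
  a * b * x / (Num.sqrt (a ^+ 2 * y) * Num.sqrt (b ^+ 2 * y)) = x / y.
Proof.
move=> a_gt0 b_gt0 y_ge0.
rewrite (sqrtrM y (sqr_ge0 a)) (sqrtrM y (sqr_ge0 b)) !sqrtr_sqr !gtr0_norm //.
by rewrite mulrACA -expr2 sqr_sqrtr // invfM mulrACA divff ?mul1r // mulf_neq0 ?gt_eqF.
Qed.

Definition increment_cov (R : pzRingType) (Rk : R -> R -> R) (s s' t t' : R) : R :=
  Rk s' t' - Rk s' t - Rk s t' + Rk s t.

Lemma increment_covC (R : comPzRingType) (Rk : R -> R -> R) (s s' t t' : R) :
  Rk s t = Rk t s -> Rk s t' = Rk t' s -> Rk s' t = Rk t s' -> Rk s' t' = Rk t' s' ->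
  increment_cov Rk s s' t t' = increment_cov Rk t t' s s'.
Proof. by rewrite /increment_cov => -> -> -> ->; ring. Qed.

Section covariance_kernel.
Context {d : measure_display} {T : measurableType d} {R : realType}.
Variables (P : probability T R) (X : R -> T -> R) (Rk : R -> R -> R).
Hypothesis X_L2 : forall s : R, 0 <= s -> X s \in Lfun P 2%:E.
Hypothesis Rk_cov : is_cov_kernel P X Rk.

Lemma cov_kernelC (s t : R) : 0 <= s -> 0 <= t -> Rk s t = Rk t s.
Proof. by move=> s_ge0 t_ge0; apply: EFin_inj; rewrite -!Rk_cov // covarianceC. Qed.

Lemma covariance_increments (s s' t t' : R) :
  0 <= s -> 0 <= s' -> 0 <= t -> 0 <= t' ->
  fine (covariance P (fun w => X s' w - X s w) (fun w => X t' w - X t w))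
  = increment_cov Rk s s' t t'.
Proof.
move=> s0 s'0 t0 t'0.
move: (X_L2 s0) (X_L2 s'0) (X_L2 t0) (X_L2 t'0) => Xs Xs' Xt Xt'.
have XtB : (X t' \- X t)%R \in Lfun P 2%:E by rewrite rpredB // lee1n.
rewrite -[fun w => _ - _]/(X s' \- X s)%R -[fun w => X t' w - _]/(X t' \- X t)%R.
rewrite covarianceBl // !covarianceBr // !Rk_cov // -!EFinB /=.
by rewrite /increment_cov; ring.
Qed.

End covariance_kernel.

Section self_similar_kernel.
Variables (R : realType) (Rk : R -> R -> R) (rho alpha : R).
Hypothesis alpha_gt0 : 0 < alpha.
Hypothesis RkC : forall s t : R, 0 <= s -> 0 <= t -> Rk s t = Rk t s.
Hypothesis Rk_scale : forall c s t : R, 0 < c -> 0 < s -> 0 < t ->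
  Rk (c * s) (c * t) = c `^ (2 * rho) * Rk s t.

Local Notation q := (alpha `^ rho).

Lemma expr_alpha_ge0 (n : nat) : 0 <= alpha ^+ n.
Proof. by rewrite exprn_ge0 // ltW. Qed.

Lemma RkC_alpha_pow (m n : nat) :
  Rk (alpha ^+ m) (alpha ^+ n) = Rk (alpha ^+ n) (alpha ^+ m).
Proof. by apply: RkC; apply: expr_alpha_ge0. Qed.

Lemma powR_alpha_double : alpha `^ (2 * rho) = q ^+ 2.
Proof. by rewrite mulrC powRrM -[2]/(2%:R) powR_mulrn ?powR_ge0. Qed.

Lemma powR_alpha_neq0 : q != 0.
Proof. by rewrite powR_eq0 gt_eqF. Qed.

Lemma Rk_alpha_pow (a b : nat) :
  Rk (alpha ^+ a) (alpha ^+ b) = q ^+ (a + b) * hfun Rk rho (alpha ^+ `|a - b|).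
Proof.
wlog le_ab : a b / (a <= b)%N.
  move=> Hwlog; have [|/ltnW le_ba] := leqP a b; first exact: Hwlog.
  by rewrite RkC_alpha_pow Hwlog // addnC distnC.
rewrite -(subnKC le_ab); set n := (b - a)%N.
have -> : `|a - (a + n)%N|%N = n by lia.
have alpha_pow_gt0 m : 0 < alpha ^+ m by rewrite exprn_gt0.
have := Rk_scale (alpha_pow_gt0 a) ltr01 (alpha_pow_gt0 n).
rewrite mulr1 -exprD => ->.
rewrite /hfun !powR_exprn ?ltW // powR_alpha_double powRN exprVn -exprM.
by rewrite addnA addnn -mul2n exprD -mulrA mulVKf ?expf_neq0 ?powR_alpha_neq0.
Qed.

Lemma increment_cov_alpha_pow (k l : nat) :
  increment_cov Rk (alpha ^+ k) (alpha ^+ k.+1) (alpha ^+ l) (alpha ^+ l.+1)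
  = q ^+ k.+1 * q ^+ l.+1 * Lfun_j Rk rho alpha `|k - l|.
Proof.
wlog le_kl : k l / (k <= l)%N.
  move=> Hwlog; have [|/ltnW le_lk] := leqP k l; first exact: Hwlog.
  rewrite increment_covC; try exact: RkC_alpha_pow.
  by rewrite Hwlog // [q ^+ l.+1 * _]mulrC distnC.
rewrite -(subnKC le_kl); set j := (l - k)%N.
rewrite /increment_cov !Rk_alpha_pow /Lfun_j !powRN powR_alpha_double.
have -> : `|k.+1 - (k + j).+1|%N = j by lia.
have -> : `|k.+1 - (k + j)|%N = `|(j%:Z - 1)%R|%N by lia.
have -> : `|k - (k + j).+1|%N = j.+1 by lia.
have -> : `|k - (k + j)|%N = j by lia.
rewrite !(addnS, addSn) !exprS !exprD; field.
exact: powR_alpha_neq0.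
Qed.

End self_similar_kernel.

Theorem lemma4p5 (d : measure_display) (T : measurableType d) (R : realType)
  (P : probability T R) (X : R -> T -> R) (Rk : R -> R -> R) (rho alpha : R)
  (HG : gaussian_process P X)
  (HL2 : forall s : R, 0 <= s -> X s \in Lfun P 2%:E)
  (Hcent : centered_process P X)
  (Hcont : continuous_paths X)
  (Hcov : is_cov_kernel P X Rk)
  (Hrho : 0 < rho)
  (Hscale : forall c s t : R, 0 < c -> 0 < s -> 0 < t ->
              Rk (c * s) (c * t) = c `^ (2 * rho) * Rk s t)
  (Halpha : 1 < alpha)
  (k l : nat)
  (Hk : 0 < gamma_kl P X alpha k k) (Hl : 0 < gamma_kl P X alpha l l) :
  gamma_kl P X alpha k l
    / (Num.sqrt (gamma_kl P X alpha k k) * Num.sqrt (gamma_kl P X alpha l l))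
  = Lfun_j Rk rho alpha `|(k%:Z - l%:Z)%R|%N / Lfun_j Rk rho alpha 0.
Proof.
have alpha_gt0 : 0 < alpha by apply: lt_trans Halpha.
have RkC := cov_kernelC Hcov.
have gammaE m n : gamma_kl P X alpha m n
    = (alpha `^ rho) ^+ m.+1 * (alpha `^ rho) ^+ n.+1 * Lfun_j Rk rho alpha `|m - n|.
  rewrite /gamma_kl (covariance_increments HL2 Hcov) ?(expr_alpha_ge0 alpha_gt0) //.
  exact: increment_cov_alpha_pow.
have q_gt0 n : 0 < (alpha `^ rho) ^+ n by rewrite exprn_gt0 // powR_gt0.
have L0_gt0 : 0 < Lfun_j Rk rho alpha 0.
  by move: Hk; rewrite gammaE distnn pmulr_rgt0 // mulr_gt0.
by rewrite !gammaE !distnn -!expr2 corr_scaled // ltW.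
Qed.
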